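(* Let $G$ and $H$ be ordered graphs, each with $m$ edges, and suppose $M_{1,G}=M_{1,H}$ in $\mathbb C^m$. Then the edge bijection sending the $k$-th edge of $G$ to the $k$-th edge of $H$ (for $k=1,\dots,m$) is a cycle isomorphism.
   Context: An ordered graph is a finite vertex set with a sequence $(E_1,\dots,E_m)$ of distinct unordered pairs of distinct vertices. For a configuration $\mathbf p$ assigning $\mathbf p_i\in\mathbb C$ to each vertex, $m_G(\mathbf p)\in\mathbb C^m$ has $k$-th coordinate $(\mathbf p_i-\mathbf p_j)^2$ with $E_k=\{i,j\}$; $M_{1,G}$ is the Zariski closure of the image of $m_G$. A set of edges is cycle supported if its edges, in some order, form a simple cycle. An edge bijection between two graphs is a cycle isomorphism if a set of edges is cycle supported exactly when its image is cycle supported. *)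

From HB Require Import structures.
From mathcomp Require Import all_boot all_order all_algebra.
Set Implicit Arguments. Unset Strict Implicit. Unset Printing Implicit Defensive.
Import Order.TTheory GRing.Theory Num.Theory.
Local Open Scope ring_scope.

Definition edge_is (T : eqType) (e : T * T) (x y : T) : bool :=
  (e == (x, y)) || (e == (y, x)).

(* An ordered graph on the finite vertex type T with m edges: the k-th edge
   is E k, an unordered pair represented by an ordered pair of vertices. *)
Definition ordered_graph (T : finType) (m : nat) (E : 'I_m -> T * T) : Prop :=
  (forall k, (E k).1 != (E k).2) /\
  (forall k l, edge_is (E k) (E l).1 (E l).2 -> k = l).

Definition mG (R : nzRingType) (T : finType) (m : nat) (E : 'I_m -> T * T)
  (p : T -> R) : 'I_m -> R :=
  fun k => (p (E k).1 - p (E k).2) ^+ 2.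

Inductive mpoly (R : Type) (m : nat) : Type :=
| PVar of 'I_m
| PConst of R
| PAdd of mpoly R m & mpoly R m
| PMul of mpoly R m & mpoly R m
| POpp of mpoly R m.

Fixpoint peval (R : nzRingType) (m : nat) (f : mpoly R m) (x : 'I_m -> R) : R :=
  match f with
  | PVar i => x i
  | PConst c => c
  | PAdd f g => peval f x + peval g x
  | PMul f g => peval f x * peval g x
  | POpp f => - peval f x
  end.

Definition zariski_closure (R : nzRingType) (m : nat) (S : ('I_m -> R) -> Prop)
  (x : 'I_m -> R) : Prop :=
  forall f : mpoly R m, (forall y, S y -> peval f y = 0) -> peval f x = 0.

Definition M1 (R : nzRingType) (T : finType) (m : nat) (E : 'I_m -> T * T)
  (x : 'I_m -> R) : Prop :=
  zariski_closure (fun y => exists p : T -> R, y = mG E p) x.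

(* The edge set S (of indices) is cycle supported: its edges, in some order,
   form a simple cycle, i.e. there are distinct vertices v_0, ..., v_{n-1},
   n >= 3, such that S is exactly the set of edges {v_i, v_{i+1 mod n}}. *)
Definition cycle_supported (T : finType) (m : nat) (E : 'I_m -> T * T)
  (S : {set 'I_m}) : Prop :=
  exists s : seq T,
    [/\ (2 < size s)%N, uniq s,
      (forall i, (i < size s)%N ->
         exists2 k, k \in S &
           edge_is (E k) (nth (head (E k).1 s) s i)
                         (nth (head (E k).1 s) s ((i.+1) %% size s)))
    & (forall k, k \in S -> exists2 i, (i < size s)%N &
           edge_is (E k) (nth (E k).1 s i) (nth (E k).1 s ((i.+1) %% size s)))].

Definition cycle_isomorphism_id (T1 T2 : finType) (m : nat)
  (E1 : 'I_m -> T1 * T1) (E2 : 'I_m -> T2 * T2) : Prop :=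
  forall S : {set 'I_m}, cycle_supported E1 S <-> cycle_supported E2 S.

From HB Require Import structures.
From mathcomp Require Import all_boot all_order all_algebra ring.
From Stdlib Require Import Classical.
Set Implicit Arguments. Unset Strict Implicit. Unset Printing Implicit Defensive.
Import GRing.Theory Num.Theory.
Local Open Scope ring_scope.

(* Call a set S of edge indices independent when the coordinate projection
   of M_{1,G} onto S is onto.  Cycle-supported sets turn out to be exactly
   the circuits of this matroid, and circuits only depend on M_{1,G}.
   Along a cycle v_0 ... v_(n-1) of G the squared lengths
   x_i = (p v_(i+1) - p v_i)^2 have square roots summing to 0, so the product
   of all sums +-sqrt x_0 +- ... +- sqrt x_(n-1), which is a polynomial in the
   x_i, vanishes on M_{1,G}; it equals 1 at (0, ..., 0, 1), hence a cycle is
   dependent.  Conversely, prescribed squared lengths on a forest (for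
   instance a cycle minus one edge) are realized by building the
   configuration p edge by edge. *)

Section SquareRootElimination.
Variable R : comNzRingType.

Inductive expr (V : Type) : Type :=
| EVar of V
| ECst of R
| EAdd of expr V & expr V
| EMul of expr V & expr V
| EOpp of expr V.

Fixpoint eval_expr V (r : V -> R) (e : expr V) : R :=
  match e with
  | EVar v => r v
  | ECst c => c
  | EAdd a b => eval_expr r a + eval_expr r b
  | EMul a b => eval_expr r a * eval_expr r b
  | EOpp a => - eval_expr r a
  end.

Fixpoint subst_expr V W (s : V -> expr W) (e : expr V) : expr W :=
  match e with
  | EVar v => s v
  | ECst c => ECst W c
  | EAdd a b => EAdd (subst_expr s a) (subst_expr s b)
  | EMul a b => EMul (subst_expr s a) (subst_expr s b)
  | EOpp a => EOpp (subst_expr s a)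
  end.

Lemma eval_subst_expr V W (s : V -> expr W) r e :
  eval_expr r (subst_expr s e) = eval_expr (fun v => eval_expr r (s v)) e.
Proof. by elim: e => //= [a -> b -> | a -> b -> | a ->]. Qed.

Lemma eq_eval_expr V (r1 r2 : V -> R) e : r1 =1 r2 -> eval_expr r1 e = eval_expr r2 e.
Proof. by move=> r12; elim: e => //= [a -> b -> | a -> b -> | a ->]. Qed.

(* Writing [e] in the adjoined variable [None =: z] as [a + z b] modulo
   [z ^+ 2 = w]. *)
Fixpoint sqrt_split V (w : expr V) (e : expr (option V)) : expr V * expr V :=
  match e with
  | EVar None => (ECst V 0, ECst V 1)
  | EVar (Some v) => (EVar v, ECst V 0)
  | ECst c => (ECst V c, ECst V 0)
  | EAdd a b => (EAdd (sqrt_split w a).1 (sqrt_split w b).1,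
                 EAdd (sqrt_split w a).2 (sqrt_split w b).2)
  | EMul a b =>
      (EAdd (EMul (sqrt_split w a).1 (sqrt_split w b).1)
            (EMul w (EMul (sqrt_split w a).2 (sqrt_split w b).2)),
       EAdd (EMul (sqrt_split w a).1 (sqrt_split w b).2)
            (EMul (sqrt_split w a).2 (sqrt_split w b).1))
  | EOpp a => (EOpp (sqrt_split w a).1, EOpp (sqrt_split w a).2)
  end.

Lemma eval_sqrt_split V (w : expr V) r z e : z ^+ 2 = eval_expr r w ->
  eval_expr (oapp r z) e =
  eval_expr r (sqrt_split w e).1 + z * eval_expr r (sqrt_split w e).2.
Proof.
move=> zw; elim: e => /=.
- by case=> [v|] /=; ring.
- by move=> c; ring.
- by move=> a -> b ->; ring.
- by move=> a -> b ->; rewrite -zw; ring.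
- by move=> a ->; ring.
Qed.

(* The norm [a ^+ 2 - w b ^+ 2] of [a + z b] eliminates [z]. *)
Definition sqrt_norm V (w : expr V) (e : expr (option V)) : expr V :=
  let ab := sqrt_split w e in
  EAdd (EMul ab.1 ab.1) (EOpp (EMul w (EMul ab.2 ab.2))).

Lemma eval_sqrt_norm V (w : expr V) r z e : z ^+ 2 = eval_expr r w ->
  eval_expr r (sqrt_norm w e) = eval_expr (oapp r z) e * eval_expr (oapp r (- z)) e.
Proof.
move=> zw; have zw' : (- z) ^+ 2 = eval_expr r w by rewrite sqrrN.
by rewrite (eval_sqrt_split _ zw) (eval_sqrt_split _ zw') /= -zw; ring.
Qed.

Variables (V : Type) (f : nat -> V).

Definition shift_var (o : option V) : expr (option (option V)) :=
  if o is Some v then EVar (Some (Some v))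
  else EAdd (EVar (Some None)) (EOpp (EVar None)).

(* In the variable [None =: t], [signed_prod k] is the product of
   [t - (+-z_0 +- ... +- z_(k-1))] over all signs, where [z_i ^+ 2 = x (f i)]. *)
Fixpoint signed_prod (k : nat) : expr (option V) :=
  if k is k'.+1 then sqrt_norm (EVar (Some (f k'))) (subst_expr shift_var (signed_prod k'))
  else EVar None.

Lemma eval_signed_prodS x t z k : z ^+ 2 = x (f k) ->
  eval_expr (oapp x t) (signed_prod k.+1) =
  eval_expr (oapp x (t - z)) (signed_prod k) * eval_expr (oapp x (t + z)) (signed_prod k).
Proof.
move=> zx; rewrite [signed_prod _]/= (@eval_sqrt_norm _ (EVar (Some (f k))) (oapp x t) z) //.
rewrite !eval_subst_expr.
by congr (_ * _); apply: eq_eval_expr; case=> [v|] //=; rewrite opprK.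
Qed.

Lemma signed_prod_root x (z : nat -> R) k : (forall i, (i < k)%N -> z i ^+ 2 = x (f i)) ->
  eval_expr (oapp x (\sum_(0 <= i < k) z i)) (signed_prod k) = 0.
Proof.
elim: k => [|k IHk] zx; first by rewrite big_geq.
rewrite (eval_signed_prodS _ (zx k _)) // big_nat_recr //= addrK IHk ?mul0r //.
by move=> i ik; apply: zx; apply: ltnW.
Qed.

Lemma signed_prod_pow x t k : (forall i, (i < k)%N -> x (f i) = 0) ->
  eval_expr (oapp x t) (signed_prod k) = t ^+ (2 ^ k).
Proof.
elim: k t => [|k IHk] t x0; first by rewrite expr1.
rewrite (eval_signed_prodS _ (z := 0)); last by rewrite x0 // expr0n.
rewrite subr0 addr0 IHk => [|i ik]; last by apply: x0; apply: ltnW.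
by rewrite expnS mul2n -addnn exprD.
Qed.

Definition signed_sum_norm (n : nat) : expr V :=
  subst_expr (oapp (@EVar V) (ECst V 0)) (signed_prod n).

Lemma eval_signed_sum_norm x n :
  eval_expr x (signed_sum_norm n) = eval_expr (oapp x 0) (signed_prod n).
Proof. by rewrite eval_subst_expr; apply: eq_eval_expr; case. Qed.

Lemma signed_sum_norm_root x (z : nat -> R) n :
  (forall i, (i < n)%N -> z i ^+ 2 = x (f i)) -> \sum_(0 <= i < n) z i = 0 ->
  eval_expr x (signed_sum_norm n) = 0.
Proof. by move=> zx z0; rewrite eval_signed_sum_norm -z0 signed_prod_root. Qed.

Lemma signed_sum_norm_unit x n : (1 < n)%N ->
  (forall i, (i < n.-1)%N -> x (f i) = 0) -> x (f n.-1) = 1 ->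
  eval_expr x (signed_sum_norm n) = 1.
Proof.
case: n => [|[|k]] // _ x0 x1; rewrite /= in x0 x1.
rewrite eval_signed_sum_norm (eval_signed_prodS _ (z := 1)) ?x1 ?expr1n //.
by rewrite !signed_prod_pow // !add0r expnS exprM sqrrN !expr1n mulr1.
Qed.

End SquareRootElimination.

(* The j-th increment closes the cycle. *)
Lemma increments_except_one (V : zmodType) (n j : nat) (c : nat -> V) : (j < n)%N ->
  exists g : nat -> V, g n = g 0%N /\ forall i, (i < n)%N -> i != j -> g i.+1 = g i + c i.
Proof.
move=> jn; pose total := \sum_(0 <= t < n | t != j) c t.
exists (fun i => \sum_(0 <= t < i | t != j) c t - (if (j < i)%N then total else 0)).
split; first by rewrite jn subrr big_geq // subr0.
move=> i _ ij; rewrite big_mkcond big_nat_recr //= -big_mkcond /= ij.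
by rewrite ltnS leq_eqVlt eq_sym (negbTE ij) addrAC.
Qed.

Section EdgeIncidence.
Variable T : eqType.

Lemma edge_isC (e : T * T) a b : edge_is e a b = edge_is e b a.
Proof. by rewrite /edge_is orbC. Qed.

Lemma edge_is_self (e : T * T) : edge_is e e.1 e.2.
Proof. by rewrite /edge_is -surjective_pairing eqxx. Qed.

Lemma edge_is_ends (e : T * T) a b c d : edge_is e a b -> edge_is e c d ->
  (a = c /\ b = d) \/ (a = d /\ b = c).
Proof.
case: e => e1 e2; rewrite /edge_is !xpair_eqE.
by do 2 case/orP=> /andP [/eqP <- /eqP <-]; auto.
Qed.

End EdgeIncidence.

Lemma ordered_graph_edge_inj (T : finType) (m : nat) (E : 'I_m -> T * T) k l a b :
  ordered_graph E -> edge_is (E k) a b -> edge_is (E l) a b -> k = l.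
Proof.
move=> [_ E_inj] ka la; apply: E_inj.
by case: (edge_is_ends la (edge_is_self (E l))) => [[<- <-] | [<- <-]]; rewrite // edge_isC.
Qed.

Section CoordinateMatroid.
Variables (R : Type) (m : nat).
Implicit Types (M : ('I_m -> R) -> Prop) (S : {set 'I_m}).

Definition coord_independent M S : Prop :=
  forall y : 'I_m -> R, exists2 x, M x & {in S, x =1 y}.

Definition coord_circuit M S : Prop :=
  ~ coord_independent M S /\ {in S, forall k, coord_independent M (S :\ k)}.

Lemma coord_independentS M S1 S2 :
  S1 \subset S2 -> coord_independent M S2 -> coord_independent M S1.
Proof.
move=> /subsetP S12 S2_indep y; have [x Mx xS2] := S2_indep y.
by exists x => // k /S12; apply: xS2.
Qed.

Lemma coord_circuit_ext M M' S :
  (forall x, M x <-> M' x) -> coord_circuit M S <-> coord_circuit M' S.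
Proof.
move=> MM'; have indep_ext S' : coord_independent M S' <-> coord_independent M' S'.
  by split=> indep y; have [x /MM' Mx xS'] := indep y; exists x.
by rewrite /coord_circuit indep_ext; split=> [] [? crit]; split=> // k /crit /indep_ext.
Qed.

End CoordinateMatroid.

Section CycleCircuits.
Variables (C : numClosedFieldType) (T : finType) (m : nat) (E : 'I_m -> T * T).
Hypothesis E_graph : ordered_graph E.
Local Notation M1G := (@M1 C T m E).
Implicit Types (S : {set 'I_m}) (p : T -> C).

Fixpoint to_mpoly (e : expr C 'I_m) : mpoly C m :=
  match e with
  | EVar i => PVar C i
  | ECst c => PConst m c
  | EAdd a b => PAdd (to_mpoly a) (to_mpoly b)
  | EMul a b => PMul (to_mpoly a) (to_mpoly b)
  | EOpp a => POpp (to_mpoly a)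
  end.

Lemma peval_to_mpoly e x : peval (to_mpoly e) x = eval_expr x e.
Proof. by elim: e => //= [a -> b -> | a -> b -> | a ->]. Qed.

Lemma mG_M1 (p : T -> C) : M1G (mG E p).
Proof. by move=> F F0; apply: F0; exists p. Qed.

Lemma mG_edge (p : T -> C) k a b : edge_is (E k) a b -> mG E p k = (p a - p b) ^+ 2.
Proof. by rewrite /edge_is /mG; case/orP => /eqP -> //=; rewrite -opprB sqrrN. Qed.

Lemma coord_independent_mG (S : {set 'I_m}) :
  (forall y, exists p : T -> C, {in S, mG E p =1 y}) -> coord_independent M1G S.
Proof. by move=> realize y; have [p pS] := realize y; exists (mG E p); first exact: mG_M1. Qed.

Lemma cycle_walk (S : {set 'I_m}) : cycle_supported E S ->
  exists n (v : nat -> T) (f : nat -> 'I_m),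
  [/\ (2 < n)%N, v n = v 0%N,
      (forall i j, (i < n)%N -> (j < n)%N -> v i = v j -> i = j),
      (forall i, (i < n)%N -> f i \in S /\ edge_is (E (f i)) (v i) (v i.+1))
    & (forall k, k \in S -> exists2 i, (i < n)%N & edge_is (E k) (v i) (v i.+1))].
Proof.
case=> s [s_gt2 s_uniq s_edges S_edges]; set n := size s in s_gt2 s_edges S_edges.
have n_gt0 : (0 < n)%N by apply: ltn_trans s_gt2.
have [k0 _ _] := s_edges 0%N n_gt0.
pose d := (E k0).1; pose v i := nth d s (i %% n).
have vE i : (i < n)%N -> v i = nth d s i by move=> ?; rewrite /v modn_small.
have nthE x i : (i < n)%N ->
    (nth x s i, nth x s (i.+1 %% n)) = (v i, v i.+1).
  by move=> i_lt; rewrite vE // !(set_nth_default d) // ltn_pmod.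
exists n, v, (fun i => odflt k0 [pick k in S | edge_is (E k) (v i) (v i.+1)]).
split => //.
- by rewrite /v modnn mod0n.
- by move=> i j i_lt j_lt; rewrite !vE // => /eqP; rewrite nth_uniq // => /eqP.
- move=> i i_lt; case: pickP => [k /andP [] // | none]; exfalso.
  have [k kS] := s_edges i i_lt; case: (nthE (head (E k).1 s) i i_lt) => -> ->.
  by move: (none k); rewrite kS => /= ->.
- move=> k kS; have [i i_lt ke] := S_edges k kS; exists i => //.
  by move: ke; case: (nthE (E k).1 i i_lt) => -> ->.
Qed.

Lemma cycle_not_independent S : cycle_supported E S -> ~ coord_independent M1G S.
Proof.
move=> /cycle_walk [n [v [f [n_gt2 v_n v_inj f_edge _]]]] S_indep.
have n_gt1 : (1 < n)%N by apply: ltnW.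
have nK : n.-1.+1 = n by rewrite prednK // ltnW.
have last_lt : (n.-1 < n)%N by rewrite -[X in (_ < X)%N]nK.
have f_last i : (i < n.-1)%N -> f i != f n.-1.
  move=> i_lt; apply/eqP => fi; have i_ltn : (i < n)%N by apply: ltn_trans last_lt.
  have [_ ei] := f_edge i i_ltn; have [_] := f_edge n.-1 last_lt.
  rewrite -fi nK v_n => el; case: (edge_is_ends ei el) => [[vi _] | [vi vi1]].
    by move: i_lt; rewrite (v_inj _ _ i_ltn last_lt vi) ltnn.
  have i0 := v_inj _ _ i_ltn (ltnW n_gt1) vi; rewrite i0 in i_lt vi1.
  by move: n_gt2; rewrite -nK -(v_inj _ _ n_gt1 last_lt vi1).
have [x xM xS] := S_indep (fun k => if k == f n.-1 then 1 else 0).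
have : eval_expr x (signed_sum_norm C f n) = 0.
  rewrite -peval_to_mpoly; apply: xM => _ [p ->]; rewrite peval_to_mpoly.
  apply: (signed_sum_norm_root (z := fun i => p (v i.+1) - p (v i))).
    by move=> i i_lt; have [_ /mG_edge ->] := f_edge i i_lt; rewrite -opprB sqrrN.
  by rewrite telescope_sumr // v_n subrr.
rewrite signed_sum_norm_unit // => [/eqP | i i_lt |]; first by rewrite oner_eq0.
  by rewrite xS ?(negbTE (f_last i i_lt)) //; have [] := f_edge i (ltn_trans i_lt last_lt).
by rewrite xS ?eqxx //; have [] := f_edge n.-1 last_lt.
Qed.

Lemma cycle_minus_edge_independent S k : cycle_supported E S -> k \in S ->
  coord_independent M1G (S :\ k).
Proof.
move=> /cycle_walk [n [v [f [_ v_n v_inj f_edge S_edge]]]] kS.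
apply: coord_independent_mG => y.
have [j j_lt kj] := S_edge k kS.
have [g [g_n g_step]] := increments_except_one (fun i => sqrtC (y (f i))) j_lt.
pose p u := if [pick i : 'I_n | v i == u] is Some i then g i else 0.
have p_v i : (i <= n)%N -> p (v i) = g i.
  have p_v_lt i' : (i' < n)%N -> p (v i') = g i'.
    move=> i'_lt; rewrite /p; case: pickP => [i'' /eqP vi'' | none].
      by rewrite (v_inj _ _ (ltn_ord i'') i'_lt vi'').
    by move: (none (Ordinal i'_lt)); rewrite eqxx.
  rewrite leq_eqVlt => /orP [/eqP -> | /p_v_lt //].
  by rewrite v_n g_n p_v_lt // (leq_ltn_trans _ j_lt).
exists p => k'; rewrite in_setD1 => /andP [k'k k'S].
have [i i_lt k'e] := S_edge k' k'S.
have ij : i != j.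
  apply: contraNneq k'k => ij; rewrite ij in k'e.
  exact/eqP/(ordered_graph_edge_inj E_graph k'e kj).
have fi : f i = k'.
  by have [_ fe] := f_edge i i_lt; exact: ordered_graph_edge_inj E_graph fe k'e.
rewrite (mG_edge _ k'e) !p_v ?(ltnW i_lt) // g_step // -fi.
by rewrite opprD addrA subrr add0r sqrrN sqrtCK.
Qed.

Definition adj (S : {set 'I_m}) : rel T := fun u w => [exists e in S, edge_is (E e) u w].

Lemma adj_sym S : symmetric (adj S).
Proof.
by move=> u w; apply/existsP/existsP => [] [e /andP [eS ee]]; exists e; rewrite eS edge_isC.
Qed.

Lemma adj_edge S e : e \in S -> adj S (E e).1 (E e).2.
Proof. by move=> eS; apply/existsP; exists e; rewrite eS edge_is_self. Qed.

Lemma connect_closes_cycle S k : k \in S -> connect (adj (S :\ k)) (E k).2 (E k).1 ->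
  exists2 Cs : {set 'I_m}, Cs \subset S & cycle_supported E Cs.
Proof.
set a := (E k).1; set b := (E k).2.
have kba : edge_is (E k) b a by rewrite edge_isC; exact: edge_is_self.
move=> kS /connectP [q]; case/shortenP => q' bq' q'_uniq _ a_last.
have s_gt2 : (2 < size (b :: q'))%N.
  case: q' bq' q'_uniq a_last => [|a' [|a'' q'']] //=.
    by move=> _ _ ab; move: (E_graph.1 k); rewrite -/a -/b ab eqxx.
  move=> /andP [/existsP [e /andP [eS eba']] _] _ aa'; rewrite -aa' in eba'.
  by move: eS; rewrite (ordered_graph_edge_inj E_graph eba' kba) in_setD1 eqxx.
set s := b :: q' in s_gt2 bq' q'_uniq *.
pose on_s e :=
  [exists i : 'I_(size s), edge_is (E e) (nth b s i) (nth b s (i.+1 %% size s))].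
exists [set e in S | on_s e]; first by apply/subsetP => e; rewrite inE => /andP [].
exists s; split => //=.
- move=> i; rewrite ltnS leq_eqVlt => /orP [/eqP -> | i_lt].
    have s_last : nth b s (size q') = a by rewrite a_last; exact: nth_last.
    have ke : edge_is (E k) (nth b s (size q')) (nth b s (size s %% size s)).
      by rewrite modnn s_last edge_isC.
    exists k => //; rewrite inE kS; apply/existsP.
    exact: (ex_intro _ (Ordinal (ltnSn _)) ke).
  have := pathP b bq' i i_lt; rewrite modn_small // => /existsP [e /andP [eS ee]].
  exists e => //; rewrite inE (subsetP (subD1set S k) _ eS); apply/existsP.
  by exists (Ordinal (leqW i_lt)); rewrite /= modn_small.
- move=> e; rewrite inE => /andP [_ /existsP [i ei]]; exists i => //.
  by rewrite !(set_nth_default b) // ltn_pmod.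
Qed.

Lemma potential_bridge S k p z : ~~ connect (adj S) (E k).2 (E k).1 ->
  exists q : T -> C, mG E q k = z ^+ 2 /\ {in S, mG E q =1 mG E p}.
Proof.
set a := (E k).1; set b := (E k).2 => not_ba.
pose shift := p a - p b - z.
exists (fun u => p u + (if connect (adj S) b u then shift else 0)); split.
  rewrite /mG -/a -/b connect0 (negbTE not_ba) addr0.
  by congr (_ ^+ 2); rewrite /shift; ring.
move=> e eS; have e12 := adj_edge eS; rewrite /mG.
have -> : connect (adj S) b (E e).2 = connect (adj S) b (E e).1.
  apply/idP/idP => [b2 | b1]; last exact: connect_trans b1 (connect1 e12).
  by apply: connect_trans b2 (connect1 _); rewrite adj_sym.
by case: ifP => _; congr (_ ^+ 2); ring.
Qed.

Lemma acyclic_potentials S :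
  (forall Cs : {set 'I_m}, Cs \subset S -> ~ cycle_supported E Cs) ->
  forall y : 'I_m -> C, exists p, {in S, mG E p =1 y}.
Proof.
move=> acyclic y; have [n] := ubnP #|S|; elim: n S acyclic => // n IHn S acyclic S_lt.
case: (set_0Vmem S) => [-> | [k kS]]; first by exists (fun=> 0) => e; rewrite in_set0.
have S'_lt : (#|S :\ k| < n)%N by rewrite (cardsD1 k) kS in S_lt.
have S'_acyclic (Cs : {set 'I_m}) : Cs \subset S :\ k -> ~ cycle_supported E Cs.
  by move=> CsS; apply: acyclic; apply: subset_trans CsS (subD1set S k).
have [p pS] := IHn (S :\ k) S'_acyclic S'_lt.
have not_ba : ~~ connect (adj (S :\ k)) (E k).2 (E k).1.
  by apply/negP => /(connect_closes_cycle kS) [Cs CsS]; apply: acyclic.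
have [q [qk qS]] := potential_bridge p (sqrtC (y k)) not_ba.
exists q => e eS; case: (eqVneq e k) => [-> | ek]; first by rewrite qk sqrtCK.
by rewrite qS ?pS // in_setD1 ek.
Qed.

Lemma cycle_supported_circuit S : cycle_supported E S <-> coord_circuit M1G S.
Proof.
split=> [S_cyc | [S_dep S_crit]].
  by split=> [|k]; [exact: cycle_not_independent | exact: cycle_minus_edge_independent].
have [[Cs CsS Cs_cyc] | acyclic] :=
  classic (exists2 Cs : {set 'I_m}, Cs \subset S & cycle_supported E Cs); last first.
  case: S_dep; apply/coord_independent_mG/acyclic_potentials => Cs CsS Cs_cyc.
  by apply: acyclic; exists Cs.
have [<- // | CsS'] := eqVneq Cs S.
have /properP [_ [k kS kCs]] : Cs \proper S by rewrite properEneq CsS' CsS.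
case: (cycle_not_independent Cs_cyc); apply: coord_independentS (S_crit k kS).
apply/subsetP => e eCs; rewrite in_setD1 (subsetP CsS) // andbT.
by apply: contraNneq kCs => <-.
Qed.

End CycleCircuits.

Theorem mainTheorem14 (C : numClosedFieldType) (T1 T2 : finType) (m : nat)
  (EG : 'I_m -> T1 * T1) (EH : 'I_m -> T2 * T2) :
  ordered_graph EG -> ordered_graph EH ->
  (forall x : 'I_m -> C, M1 EG x <-> M1 EH x) ->
  cycle_isomorphism_id EG EH.
Proof.
move=> G_graph H_graph M1_eq S.
rewrite (cycle_supported_circuit C G_graph) (cycle_supported_circuit C H_graph).
exact: coord_circuit_ext.
Qed.
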